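(* Let $p$ be an odd prime, $m$ and $u$ positive integers, $q=p^m$, and $v=\gcd(m,u)$. If $\frac{m}{v}\equiv 0\pmod 4$, then \[ \left|\{c\in\mathbb{F}_q : \text{the equation } X^{p^{2u}}+X=c^{p^u} \text{ has a solution } X\in\mathbb{F}_q\}\right| = p^{m-2v}. \] *)

From mathcomp Require Import all_boot all_order all_algebra all_field.
Set Implicit Arguments. Unset Strict Implicit. Unset Printing Implicit Defensive.
Import GRing.Theory.

From mathcomp Require Import all_boot all_order all_algebra all_field all_fingroup.
From mathcomp Require Import ring zify.
Set Implicit Arguments.
Unset Strict Implicit.
Unset Printing Implicit Defensive.
Import GRing.Theory.
Local Open Scope ring_scope.

(* The map L x = x^(p^2u) + x is additive and
   c |-> c^(p^u) is a bijection of F, so the count is #|L @: F| =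
   #|F| / #|ker L|.  As 4 divides m / v, there is a Bezout relation
   k u = l m + v with k and u / v odd; iterating x^(p^2u) = -x or
   x^(p^2v) = -x an odd number of times and using x^(p^m) = x shows that
   ker L is the root set of X^(p^2v) + X.  That polynomial divides
   X^(p^m) - X, the product of all X - a over F, so it has exactly p^2v
   roots in F. *)

Lemma card_img_mul_card_ker (U V : finZmodType) (f : U -> V) :
  {morph f : x y / x + y} ->
  (#|f @: [set: U]| * #|[set x | f x == 0%R]|)%N = #|U|.
Proof.
move=> fD; pose fM := @Morphism U V setT f (in2W fD).
have -> : [set x | f x == 0] = ('ker fM)%g by apply/setP => x; rewrite !inE.
by rewrite -(morphimEdom fM) card_morphim setTI mulnC Lagrange ?subsetT ?cardsT.
Qed.

Lemma expr_iter_fixed (R : pzSemiRingType) (n k : nat) (x : R) :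
  x ^+ n = x -> x ^+ (n ^ k) = x.
Proof.
by move=> xn; elim: k => [|k IHk]; rewrite ?expn0 ?expr1 // expnS exprM xn.
Qed.

Lemma expr_iter_opp (R : nzRingType) (n k : nat) (x : R) :
  odd n -> x ^+ n = - x -> x ^+ (n ^ k) = (-1) ^+ k * x.
Proof.
move=> n_odd xn; elim: k => [|k IHk]; first by rewrite expn0 expr1 mul1r.
rewrite expnSr exprM IHk exprMn_comm; last exact/commr_sym/commr_sign.
rewrite -exprM -[(-1) ^+ (k * n)]signr_odd oddM n_odd andbT signr_odd xn.
by rewrite mulrN exprS mulN1r mulNr.
Qed.

Lemma dvdp_XnDX_iter (R : idomainType) (n k : nat) : odd n ->
  ('X^n + 'X : {poly R}) %| 'X^(n ^ k) - (-1) ^+ k * 'X.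
Proof.
move=> n_odd; elim: k => [|k IHk]; first by rewrite expn0 mul1r subrr dvdp0.
set P : {poly R} := 'X^n + 'X; set A : {poly R} := 'X^(n ^ k).
have signXn : ((-1) ^+ k * 'X) ^+ n = (-1) ^+ k * 'X^n :> {poly R}.
  by rewrite exprMn -exprM -[(-1) ^+ (k * n)]signr_odd oddM n_odd andbT signr_odd.
(* IHk: P divides A - (-1)^k X, hence also A^n - ((-1)^k X)^n. *)
suff : P %| (A ^+ n - ((-1) ^+ k * 'X) ^+ n) + (-1) ^+ k * P.
  by congr (_ %| _); rewrite signXn /P /A expnSr exprM exprS; ring.
by apply: dvdp_add; rewrite ?dvdp_mull // subrXX dvdp_mulr.
Qed.

Lemma card_roots_dvdp_genPoly (F : finFieldType) (P : {poly F}) :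
  P %| 'X^#|F| - 'X -> #|[set x | root P x]| = (size P).-1.
Proof.
rewrite finField_genPoly -big_enum /= => /dvdp_prod_XsubC[msk eqP].
set r := mask msk (enum F) in eqP.
have -> : [set x | root P x] = [set x in r].
  by apply/setP => x; rewrite !inE (eqp_root eqP) root_prod_XsubC.
rewrite (eqp_size eqP) size_prod_XsubC /= cardsE.
by apply/card_uniqP; rewrite mask_uniq ?enum_uniq.
Qed.

Lemma card_XnDX_roots (F : finFieldType) (n j : nat) :
  odd n -> ~~ odd j -> #|F| = (n ^ j)%N ->
  #|[set x : F | x ^+ n + x == 0]| = n.
Proof.
move=> n_odd j_even cardF.
have n_gt1 : (1 < n)%N.
  case: n n_odd cardF => [|[|n]] // _ cardF.
  by have := card_finNzRing_gt1 F; rewrite cardF exp1n.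
have PdvdG : ('X^n + 'X : {poly F}) %| 'X^#|F| - 'X.
  have signX : 'X = (-1) ^+ j * 'X :> {poly F}.
    by rewrite -signr_odd (negbTE j_even) mul1r.
  by rewrite cardF [X in _ - X]signX dvdp_XnDX_iter.
have sizeP : size ('X^n + 'X : {poly F}) = n.+1.
  by rewrite size_polyDl size_polyXn // size_polyX ltnS.
rewrite -[RHS]/(n.+1.-1) -sizeP -card_roots_dvdp_genPoly //.
by apply: eq_card => x; rewrite !inE rootE !hornerE.
Qed.

Lemma odd_gcdn_cofactors (m u : nat) : (0 < u)%N -> ~~ odd (m %/ gcdn m u) ->
  odd (u %/ gcdn m u) /\ exists k l, odd k /\ (k * u = l * m + gcdn m u)%N.
Proof.
move=> u_gt0 m'_even; set v := gcdn m u.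
have v_gt0 : (0 < v)%N by rewrite gcdn_gt0 u_gt0 orbT.
have [k l bezout _] := egcdnP m u_gt0; rewrite gcdnC -/v in bezout.
have em : m = (m %/ v * v)%N by rewrite divnK ?dvdn_gcdl.
have eu : u = (u %/ v * v)%N by rewrite divnK ?dvdn_gcdr.
have bezout' : (k * (u %/ v) = l * (m %/ v) + 1)%N.
  apply/eqP; rewrite -(eqn_pmul2r v_gt0) mulnDl mul1n -!mulnA -em -eu.
  exact/eqP.
have : odd (k * (u %/ v)) by rewrite bezout' addn1 /= oddM negb_and m'_even orbT.
by rewrite oddM => /andP[k_odd u'_odd]; split=> //; exists k, l.
Qed.

Lemma double_gcdn_leq (m u : nat) :
  (0 < m)%N -> ((m %/ gcdn m u) %% 4 = 0)%N -> (2 * gcdn m u <= m)%N.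
Proof.
move=> m_gt0 m'4; rewrite -[leqRHS](divnK (dvdn_gcdl m u)) leq_mul2r.
have : (0 < m %/ gcdn m u)%N.
  by rewrite divn_gt0 ?gcdn_gt0 ?m_gt0 // dvdn_leq ?dvdn_gcdl.
by move: m'4; case: (m %/ gcdn m u)%N => [|[|[|[|a]]]] //=; rewrite orbT.
Qed.

Lemma expr_opp_gcdn (R : nzRingType) (q m u : nat) (x : R) :
  odd q -> (0 < u)%N -> ~~ odd (m %/ gcdn m u) -> x ^+ (q ^ m) = x ->
  x ^+ (q ^ (2 * u)) = - x <-> x ^+ (q ^ (2 * gcdn m u)) = - x.
Proof.
move=> q_odd u_gt0 m'_even xqm; set v := gcdn m u.
have [u'_odd [k [l [k_odd bezout]]]] := odd_gcdn_cofactors u_gt0 m'_even.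
have oddX a : odd (q ^ a) by rewrite oddX q_odd orbT.
split=> xq.
- have := expr_iter_opp k (oddX _) xq.
  rewrite -signr_odd k_odd mulN1r -expnM.
  have -> : (2 * u * k = 2 * v + m * (2 * l))%N by rewrite -mulnA (mulnC u) bezout; lia.
  by rewrite expnD mulnC exprM expnM (expr_iter_fixed _ xqm).
- have := expr_iter_opp (u %/ v) (oddX _) xq.
  by rewrite -signr_odd u'_odd mulN1r -expnM -mulnA (mulnC v) divnK ?dvdn_gcdr.
Qed.

Lemma card_Xp2uDX_roots (F : finFieldType) (p m u : nat) :
  odd p -> (0 < u)%N -> ((m %/ gcdn m u) %% 4 = 0)%N -> #|F| = (p ^ m)%N ->
  #|[set x : F | x ^+ (p ^ (2 * u)) + x == 0]| = (p ^ (2 * gcdn m u))%N.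
Proof.
move=> p_odd u_gt0 m'4 cardF; set v := gcdn m u; set s := (m %/ v %/ 4)%N.
have m'E : (m %/ v = s * 4)%N by rewrite [LHS](divn_eq _ 4) m'4 addn0.
have m'_even : ~~ odd (m %/ v) by rewrite m'E oddM andbF.
have -> : [set x : F | x ^+ (p ^ (2 * u)) + x == 0]
        = [set x : F | x ^+ (p ^ (2 * v)) + x == 0].
  apply/setP => x; rewrite !inE !addr_eq0.
  have xpm : x ^+ (p ^ m) = x by rewrite -cardF expf_card.
  by apply/eqP/eqP => /(expr_opp_gcdn p_odd u_gt0 m'_even xpm).
rewrite (@card_XnDX_roots F _ (2 * s)) ?oddX ?p_odd ?orbT ?oddM //.
by rewrite cardF -(divnK (dvdn_gcdl m u)) -/v m'E -expnM; congr expn; lia.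
Qed.

Section FrobeniusPower.
Variables (F : fieldType) (p : nat).
Hypothesis pcharFp : p \in [pchar F].

Lemma pnat_pchar_expn k : [pchar F].-nat (p ^ k)%N.
Proof.
by rewrite (eq_pnat _ (pcharf_eq pcharFp)) pnatX pnat_id ?(pcharf_prime pcharFp).
Qed.

Lemma expr_pchar_expnD k : {morph (fun x : F => x ^+ (p ^ k)%N) : x y / x + y}.
Proof. by move=> x y; apply: exprDn_pchar (pnat_pchar_expn k). Qed.

Lemma expr_pchar_expn_inj k : injective (fun x : F => x ^+ (p ^ k)%N).
Proof.
move=> x y /= /eqP; rewrite -subr_eq0 -exprNn_pchar ?pnat_pchar_expn //.
by rewrite -expr_pchar_expnD expf_eq0 subr_eq0 => /andP[_ /eqP].
Qed.

End FrobeniusPower.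

Theorem lemma13 (F : finFieldType) (p m u : nat) :
  prime p -> odd p -> (0 < m)%N -> (0 < u)%N ->
  #|F| = (p ^ m)%N ->
  ((m %/ gcdn m u) %% 4 = 0)%N ->
  #|[set c : F | [exists x : F, x ^+ (p ^ (2 * u)) + x == c ^+ (p ^ u)]]|
    = (p ^ (m - 2 * gcdn m u))%N.
Proof.
move=> p_prime p_odd m_gt0 u_gt0 cardF m'4.
have pcharFp : p \in [pchar F] := card_finPcharP cardF p_prime.
pose L (x : F) := x ^+ (p ^ (2 * u)) + x.
have LD : {morph L : x y / x + y}.
  by move=> x y; rewrite /L expr_pchar_expnD // addrACA.
have -> : [set c | [exists x, L x == c ^+ (p ^ u)]]
        = (fun c : F => c ^+ (p ^ u)) @^-1: (L @: [set: F]).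
  apply/setP => c; rewrite !inE; apply/existsP/imsetP.
  - by case=> x /eqP Lx; exists x.
  - by case=> x _ Lx; exists x; rewrite Lx.
rewrite card_preimset; last exact: expr_pchar_expn_inj.
rewrite expnB ?prime_gt0 ?double_gcdn_leq // -cardF -(card_img_mul_card_ker LD).
by rewrite (card_Xp2uDX_roots p_odd u_gt0 m'4 cardF) mulnK ?expn_gt0 ?prime_gt0.
Qed.
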